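(* Let $p$ be a prime, $\mu\ge1$, $m=p^\mu$, and $n>2$. Let $A=(a_{ij})$ be a random symmetric $n\times n$ matrix over $\mathbf{Z}_m$, conditioned on $a_{11}\equiv0\pmod p$ and $a_{12}\not\equiv0\pmod p$. Then there is an $n\times n$ matrix $V$ (depending on $A$) such that $$VAV^T\equiv\begin{pmatrix} a_{11} & a_{12} & 0\\ a_{21} & a_{22} & 0\\ 0 & 0 & A''\end{pmatrix}\pmod{p^\mu},$$ where the off-diagonal blocks are zero and $A''$ is a random symmetric $(n-2)\times(n-2)$ matrix over $\mathbf{Z}_m$ (i.e. under the stated conditional distribution of $A$, $A''$ reduced mod $m$ is uniformly distributed over symmetric $(n-2)\times(n-2)$ matrices over $\mathbf{Z}_m$).
   Context: For a positive integer $m$, $\mathbf{Z}_m=\{1,2,\ldots,m\}$ (viewed as residues mod $m$). A random symmetric $n\times n$ matrix over $\mathbf{Z}_m$ is one whose entries $a_{ij}$, $i\le j$, are chosen independently and uniformly from $\mathbf{Z}_m$, with $a_{ji}=a_{ij}$. *)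

From HB Require Import structures.
From mathcomp Require Import all_boot all_order all_algebra.
Set Implicit Arguments. Unset Strict Implicit. Unset Printing Implicit Defensive.
Import GRing.Theory.
Local Open Scope ring_scope.

Definition split2 (n : nat) (h : (2 <= n)%N) : (2 + (n - 2) = n)%N := subnKC h.

Definition unsplit_mx (R : Type) (n : nat) (h : (2 <= n)%N) (A : 'M[R]_n)
  : 'M[R]_(2 + (n - 2)) := castmx (esym (split2 h), esym (split2 h)) A.

Definition topleft2 (R : Type) (n : nat) (h : (2 <= n)%N) (A : 'M[R]_n) : 'M[R]_2 :=
  ulsubmx (unsplit_mx h A).

Definition blockdiag2 (R : nmodType) (n : nat) (h : (2 <= n)%N)
  (B : 'M[R]_2) (C : 'M[R]_(n - 2)) : 'M[R]_n :=
  castmx (split2 h, split2 h) (block_mx B 0 0 C).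

Definition symmetricb (R : eqType) (n : nat) (A : 'M[R]_n) : bool := A^T == A.

Definition cond_event (m p n : nat) (h : (2 <= n)%N) (A : 'M['Z_m]_n) : bool :=
  let B := topleft2 h A in
  ((val (B ord0 ord0) %% p == 0)%N && (val (B ord0 ord_max) %% p != 0)%N).

(* the (finite, uniform) sample space: symmetric matrices satisfying the condition *)
Definition sample_space (m p n : nat) (h : (2 <= n)%N) : {set 'M['Z_m]_n} :=
  [set A | symmetricb A && cond_event p h A].

(** Since [a_11] is divisible by [p] while [a_12] is not, the leading 2x2 block
    [B] of [A] has determinant [a_11 a_22 - a_12^2], prime to [p]; so [B] is
    invertible mod [p^mu].  Row and column reduction by [V = (1 0; -C B^-1 1)]
    turns [A = (B C^T; C D)] into [diag(B, D - C B^-1 C^T)].  The Schur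
    complement [A'' = D - C B^-1 C^T] is symmetric, and it is uniformly
    distributed because adding a symmetric [E] to the block [D] keeps [A] in
    the sample space and shifts [A''] by exactly [E]. *)

From HB Require Import structures.
From mathcomp Require Import all_boot all_order all_algebra.
Import GRing.Theory.
Local Open Scope ring_scope.
Set Implicit Arguments. Unset Strict Implicit.

Lemma det_mx22 (R : comPzRingType) (B : 'M[R]_2) :
  \det B = B 0 0 * B 1 1 - B 0 1 * B 1 0.
Proof.
rewrite (expand_det_row _ ord0) !big_ord_recl big_ord0 /cofactor !det_mx11.
rewrite !mxE /= expr0 mul1r expr1 mulN1r addr0 mulrN.
have -> : lift ord0 (0 : 'I_1) = 1 :> 'I_2 by apply/val_inj.
by have -> : lift (1 : 'I_2) (0 : 'I_1) = 0 :> 'I_2 by apply/val_inj.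
Qed.

Lemma castmxD (R : nmodType) m1 n1 m2 n2 (eq_mn : (m1 = m2) * (n1 = n2))
    (X Y : 'M[R]_(m1, n1)) :
  castmx eq_mn (X + Y) = castmx eq_mn X + castmx eq_mn Y.
Proof. by case: eq_mn => em en; case: m2 / em; case: n2 / en. Qed.

Lemma castmx_mulmx_tr (R : pzRingType) m1 m2 (e : m1 = m2) (V A : 'M[R]_m1) :
  castmx (e, e) V *m castmx (e, e) A *m (castmx (e, e) V)^T
  = castmx (e, e) (V *m A *m V^T).
Proof. by case: m2 / e. Qed.

Section SchurComplement.
Variables (R : comUnitRingType) (a k : nat).
Implicit Types (A : 'M[R]_(a + k)).

Definition schur_complement A : 'M[R]_k :=
  drsubmx A - dlsubmx A *m invmx (ulsubmx A) *m ursubmx A.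

Definition schur_reduction_mx A : 'M[R]_(a + k) :=
  block_mx 1%:M 0 (- (dlsubmx A *m invmx (ulsubmx A))) 1%:M.

Lemma schur_reduction_mxP A : A^T = A -> ulsubmx A \in unitmx ->
  schur_reduction_mx A *m A *m (schur_reduction_mx A)^T
  = block_mx (ulsubmx A) 0 0 (schur_complement A).
Proof.
move=> symA unitB.
have trB : (ulsubmx A)^T = ulsubmx A by rewrite trmx_ulsub symA.
have trC : (dlsubmx A)^T = ursubmx A by rewrite trmx_dlsub symA.
rewrite /schur_reduction_mx /schur_complement tr_block_mx !trmx0 !trmx1.
rewrite raddfN /= trmx_mul trmx_inv trB trC.
rewrite -{3}[A]submxK !mulmx_block !mul1mx !mul0mx !mulmx1 !mulmx0 !addr0.
have CBinvB : - (dlsubmx A *m invmx (ulsubmx A)) *m ulsubmx A = - dlsubmx A.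
  by rewrite mulNmx -mulmxA mulVmx // mulmx1.
rewrite CBinvB addNr mul0mx add0r mulmxN !mulmxA mulmxV // mul1mx addNr.
by rewrite mulNmx addrC.
Qed.

Lemma schur_complement_sym A : A^T = A -> (schur_complement A)^T = schur_complement A.
Proof.
move=> symA.
have trB : (ulsubmx A)^T = ulsubmx A by rewrite trmx_ulsub symA.
have trC : (dlsubmx A)^T = ursubmx A by rewrite trmx_dlsub symA.
have trC' : (ursubmx A)^T = dlsubmx A by rewrite trmx_ursub symA.
have trD : (drsubmx A)^T = drsubmx A by rewrite trmx_drsub symA.
rewrite /schur_complement raddfB /= !trmx_mul trmx_inv.
by rewrite trB trC trC' trD mulmxA.
Qed.

Lemma schur_complement_add_drblock A (E : 'M[R]_k) :
  schur_complement (A + block_mx 0 0 0 E) = schur_complement A + E.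
Proof.
rewrite /schur_complement -[A]submxK add_block_mx !addr0.
by rewrite !block_mxKul !block_mxKur !block_mxKdl !block_mxKdr addrAC.
Qed.

End SchurComplement.

Section PrimePowerResidues.
Variables (p mu : nat).
Hypotheses (p_pr : prime p) (mu_gt0 : (0 < mu)%N).
Local Notation m := (p ^ mu)%N.

Lemma pexp_gt1 : (1 < m)%N.
Proof. by rewrite -(expn0 p) ltn_exp2l ?prime_gt1. Qed.

Lemma dvdn_Zp_pexp_natr (x : nat) : (p %| (x%:R : 'Z_m))%N = (p %| x)%N.
Proof.
by rewrite val_Zp_nat ?pexp_gt1 // /dvdn (modn_dvdm _ (dvdn_exp mu_gt0 (dvdnn p))).
Qed.

Lemma unitZp_pexpE (x : 'Z_m) : (x \is a GRing.unit) = ~~ (p %| x)%N.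
Proof.
by rewrite -{1}[x]natr_Zp unitZpE ?pexp_gt1 // coprime_pexpl // prime_coprime.
Qed.

(* The determinant [a d - b^2] is congruent to [-b^2] modulo [p]. *)
Lemma unitmx_Zp_pexp_22 (B : 'M['Z_m]_2) :
  B ord_max ord0 = B ord0 ord_max -> (p %| B ord0 ord0)%N -> ~~ (p %| B ord0 ord_max)%N ->
  B \in unitmx.
Proof.
move=> symB p_a p'b; rewrite unitmxE unitZp_pexpE; apply: contra p'b => p_det.
have detE : \det B + B ord0 ord_max * B ord0 ord_max = B ord0 ord0 * B ord_max ord_max.
  by rewrite det_mx22 (_ : 1 = ord_max) ?symB ?subrK //; apply/val_inj.
have := congr1 (fun x : 'Z_m => p %| x)%N detE.
rewrite -[\det B]natr_Zp -[B ord0 ord_max]natr_Zp -[B ord0 ord0]natr_Zp.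
rewrite -[B ord_max ord_max]natr_Zp.
rewrite -natrM -natrD -natrM !dvdn_Zp_pexp_natr dvdn_addr // (dvdn_mulr _ p_a).
by rewrite Euclid_dvdM // orbb.
Qed.

End PrimePowerResidues.

Section Reduction.
Variables (p mu n : nat).
Hypotheses (p_pr : prime p) (mu_gt0 : (0 < mu)%N) (n_ge2 : (2 <= n)%N).
Local Notation m := (p ^ mu)%N.
Local Notation S := (sample_space m p n_ge2).
Local Notation blocks A := (unsplit_mx n_ge2 A).

Lemma unsplit_mx_sym (A : 'M['Z_m]_n) : symmetricb A -> (blocks A)^T = blocks A.
Proof. by move/eqP=> symA; rewrite /unsplit_mx trmx_cast /= symA. Qed.

Lemma sample_space_sym A : A \in S -> (blocks A)^T = blocks A.
Proof. by rewrite inE => /andP[/unsplit_mx_sym]. Qed.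

Lemma sample_space_unit A : A \in S -> ulsubmx (blocks A) \in unitmx.
Proof.
move=> SA; have := SA; rewrite inE => /andP[_ /andP[p_a p'b]].
apply: unitmx_Zp_pexp_22 => //.
by rewrite -[in RHS](sample_space_sym SA) -trmx_ulsub [in RHS]mxE.
Qed.

Definition reduction_mx (A : 'M['Z_m]_n) : 'M['Z_m]_n :=
  castmx (split2 n_ge2, split2 n_ge2) (schur_reduction_mx (blocks A)).

Definition lower_block (A : 'M['Z_m]_n) : 'M['Z_m]_(n - 2) :=
  schur_complement (blocks A).

Lemma reduction_mxP A : A \in S ->
  reduction_mx A *m A *m (reduction_mx A)^T
  = blockdiag2 n_ge2 (topleft2 n_ge2 A) (lower_block A).
Proof.
move=> SA; rewrite /reduction_mx -{2}[A](castmxKV (split2 n_ge2) (split2 n_ge2)).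
by rewrite castmx_mulmx_tr schur_reduction_mxP ?sample_space_sym ?sample_space_unit.
Qed.

Lemma lower_block_sym A : A \in S -> symmetricb (lower_block A).
Proof. by move=> SA; apply/eqP/schur_complement_sym/sample_space_sym. Qed.

Definition drblock_mx (E : 'M['Z_m]_(n - 2)) : 'M['Z_m]_n :=
  castmx (split2 n_ge2, split2 n_ge2) (block_mx 0 0 0 E).

Lemma unsplit_mx_add_drblock A E :
  blocks (A + drblock_mx E) = blocks A + block_mx 0 0 0 E.
Proof. by rewrite /unsplit_mx castmxD castmxK. Qed.

Lemma sample_space_add_drblock A E :
  symmetricb E -> A \in S -> A + drblock_mx E \in S.
Proof.
move/eqP=> symE; rewrite !inE => /andP[symA condA]; apply/andP; split.
  rewrite /symmetricb raddfD /= (eqP symA) /drblock_mx trmx_cast /=.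
  by rewrite tr_block_mx !trmx0 symE.
suff topleftE : topleft2 n_ge2 (A + drblock_mx E) = topleft2 n_ge2 A.
  by rewrite /cond_event topleftE.
by rewrite /topleft2 unsplit_mx_add_drblock -[blocks A]submxK add_block_mx addr0 !block_mxKul.
Qed.

Lemma lower_block_add_drblock A E : lower_block (A + drblock_mx E) = lower_block A + E.
Proof. by rewrite /lower_block unsplit_mx_add_drblock schur_complement_add_drblock. Qed.

Lemma symmetricbB (B1 B2 : 'M['Z_m]_(n - 2)) :
  symmetricb B1 -> symmetricb B2 -> symmetricb (B2 - B1).
Proof. by move=> /eqP sym1 /eqP sym2; rewrite /symmetricb raddfB /= sym1 sym2. Qed.

Lemma card_lower_block_fibre_le (B1 B2 : 'M['Z_m]_(n - 2)) :
  symmetricb B1 -> symmetricb B2 ->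
  (#|[set A in S | lower_block A == B1]| <= #|[set A in S | lower_block A == B2]|)%N.
Proof.
move=> sym1 sym2; set E := B2 - B1.
rewrite -(card_imset _ (addIr (drblock_mx E))); apply/subset_leq_card/subsetP.
move=> X /imsetP[A]; rewrite inE => /andP[SA /eqP fibreA] ->.
by rewrite inE sample_space_add_drblock ?symmetricbB //= lower_block_add_drblock fibreA addrC subrK.
Qed.

End Reduction.

Theorem lemma2p2 (p mu n : nat) (hp : prime p) (hmu : (1 <= mu)%N)
  (hn : (2 < n)%N) :
  let m := (p ^ mu)%N in
  let h : (2 <= n)%N := ltnW hn in
  exists (V : 'M['Z_m]_n -> 'M['Z_m]_n) (A'' : 'M['Z_m]_n -> 'M['Z_m]_(n - 2)),
    (forall A, A \in sample_space m p h ->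
       V A *m A *m (V A)^T = blockdiag2 h (topleft2 h A) (A'' A)) /\
    (* A'' is uniformly distributed over symmetric (n-2)x(n-2) matrices *)
    (forall A, A \in sample_space m p h -> symmetricb (A'' A)) /\
    (forall B1 B2 : 'M['Z_m]_(n - 2), symmetricb B1 -> symmetricb B2 ->
       #|[set A in sample_space m p h | A'' A == B1]| =
       #|[set A in sample_space m p h | A'' A == B2]|).
Proof.
move=> m h; exists (reduction_mx h), (lower_block h).
split; first exact: reduction_mxP.
split; first exact: lower_block_sym.
move=> B1 B2 sym1 sym2; apply/eqP; rewrite eqn_leq.
by rewrite !card_lower_block_fibre_le.
Qed.
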